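(* Let $i\in\{1,2,3\}$ and let $v:(t_0,t_1)\times\mathbb T^3\to\mathbb R^3$, together with $L$, be a (sufficiently regular) solution of the system \[ \begin{aligned} \partial_t v^i&=-\frac{\alpha(1-3K)}{t}v^i - \frac{K}{1+K}t^{-\alpha}(1-|v|^2)\partial_i L-t^{-\alpha}v^j\partial_j v^i +t^{-\alpha}\Big(1-\frac{1-K}{1-K|v|^2}\Big)v^i\partial_j v^j\\ &\quad+t^{-\alpha}\frac{1-K}{1+K}\Big(1-\frac{1-K}{1-K|v|^2}\Big)v^i v^j\partial_j L +\frac{\alpha(1-3K)}{t}\frac{1-K}{1-K|v|^2}|v|^2 v^i,\\ \partial_tL&=-t^{-\alpha}\frac{1+K}{1-K|v|^2}\partial_j v^j-t^{-\alpha}\frac{1-K}{1-K|v|^2} v^j\partial_j L+\frac{\alpha(1+K)}{t}\frac{1-3K}{1-K|v|^2}|v|^2 . \end{aligned} \] Then the mean velocity $\overline v^i(t)=\int_{\mathbb T^3}v^i(t,x)\,d^3x$ satisfies \[ \partial_t\overline v^i=-\frac{\alpha(1-3K)}{t}\overline v^i+g^i(t), \] where \[ |g(t)|\leq C\frac{1+t^{1-\alpha}}{t}\, p\big(\overline v^j,\|D v\|_{H^1},\|D v\|_{L^{\infty}},\|D L\|_{L^2}\big) \] for a constant $C$ and a polynomial $p$ all of whose terms have degree at least two (i.e.\ vanishing zeroth and first order parts).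
   Context: Standing assumptions: $\alpha>0$ and $0\le K\le 1/3$ are constants, $t>1$, and $|v|<1/10$. $\mathbb T^3$ is the standard flat 3-torus, indices are raised/lowered with $\delta$, repeated indices summed, $|v|^2=\delta_{ij}v^iv^j$. $D$ denotes the spatial gradient and $\|f\|_{H^r}^2=\sum_{n=0}^r\int_{\mathbb T^3}|D^nf|^2$. The system is the relativistic Euler equations with $p=K\rho$ on the metric $-dt^2+t^{2\alpha}\delta$ written in variables $v^i=t^\alpha u^i/\sqrt{1+t^{2\alpha}|u|^2}$, $L=\log(t^{3\alpha(1+K)}\rho)$. *)

From Stdlib Require Import Reals Lra List.
From Coquelicot Require Import Coquelicot.
Open Scope R_scope.

(* A scalar field on (time) x R^3 : F t x1 x2 x3.  Functions on T^3 are
   represented as 1-periodic functions on R^3 (T^3 = R^3 / Z^3). *)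
Definition fld := R -> R -> R -> R -> R.

(* partial derivative in direction k: 0 = time, 1,2,3 = space x^1,x^2,x^3 *)
Definition pd (k : nat) (F : fld) : fld := fun t x y z =>
  match k with
  | O => Derive (fun s => F s x y z) t
  | 1%nat => Derive (fun s => F t s y z) x
  | 2%nat => Derive (fun s => F t x s z) y
  | _ => Derive (fun s => F t x y s) z
  end.

Definition ex_pd (k : nat) (F : fld) (t x y z : R) : Prop :=
  match k with
  | O => ex_derive (fun s => F s x y z) t
  | 1%nat => ex_derive (fun s => F t s y z) x
  | 2%nat => ex_derive (fun s => F t x s z) y
  | _ => ex_derive (fun s => F t x y s) z
  end.

Definition pdl (ds : list nat) (F : fld) : fld := fold_right pd F ds.

Definition cont4 (F : fld) (t x y z : R) : Prop :=
  forall eps, 0 < eps -> exists delta, 0 < delta /\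
    forall t' x' y' z', Rabs (t' - t) < delta -> Rabs (x' - x) < delta ->
      Rabs (y' - y) < delta -> Rabs (z' - z) < delta ->
      Rabs (F t' x' y' z' - F t x y z) < eps.

Definition smooth_on (t0 t1 : R) (F : fld) : Prop :=
  forall (ds : list nat) (k : nat) t x y z, t0 < t < t1 ->
    cont4 (pdl ds F) t x y z /\ ex_pd k (pdl ds F) t x y z.

Definition periodic (F : fld) : Prop :=
  forall t x y z, F t (x + 1) y z = F t x y z /\ F t x (y + 1) z = F t x y z
                  /\ F t x y (z + 1) = F t x y z.

(* spatial partial derivative d_j, j = 0,1,2 *)
Definition dsp (j : nat) (F : fld) : fld := pd (S j) F.

Definition sum3 (f : nat -> R) : R := f 0%nat + f 1%nat + f 2%nat.

Definition int3 (f : R -> R -> R -> R) : R :=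
  RInt (fun x => RInt (fun y => RInt (fun z => f x y z) 0 1) 0 1) 0 1.

Definition vfld := nat -> fld.

Definition vsq (v : vfld) : fld := fun t x y z => sum3 (fun j => (v j t x y z)^2).

Definition euler_eqs (alpha K : R) (v : vfld) (L : fld) (t x y z : R) : Prop :=
  let w2 := vsq v t x y z in
  let q := (1 - K) / (1 - K * w2) in
  let ta := Rpower t (- alpha) in
  (forall i, (i < 3)%nat ->
     pd 0 (v i) t x y z =
       - (alpha * (1 - 3 * K) / t) * v i t x y z
       - K / (1 + K) * ta * (1 - w2) * dsp i L t x y z
       - ta * sum3 (fun j => v j t x y z * dsp j (v i) t x y z)
       + ta * (1 - q) * v i t x y z * sum3 (fun j => dsp j (v j) t x y z)
       + ta * (1 - K) / (1 + K) * (1 - q) * v i t x y z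
            * sum3 (fun j => v j t x y z * dsp j L t x y z)
       + alpha * (1 - 3 * K) / t * q * w2 * v i t x y z) /\
  pd 0 L t x y z =
    - ta * (1 + K) / (1 - K * w2) * sum3 (fun j => dsp j (v j) t x y z)
    - ta * q * sum3 (fun j => v j t x y z * dsp j L t x y z)
    + alpha * (1 + K) / t * (1 - 3 * K) / (1 - K * w2) * w2.

Definition vbar (v : vfld) (i : nat) (t : R) : R := int3 (fun x y z => v i t x y z).

Definition Dv_sq (v : vfld) : fld := fun t x y z =>
  sum3 (fun i => sum3 (fun j => (dsp j (v i) t x y z)^2)).
Definition D2v_sq (v : vfld) : fld := fun t x y z =>
  sum3 (fun i => sum3 (fun j => sum3 (fun k => (dsp k (dsp j (v i)) t x y z)^2))).

Definition norm_Dv_H1 (v : vfld) (t : R) : R :=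
  sqrt (int3 (fun x y z => Dv_sq v t x y z + D2v_sq v t x y z)).

Definition norm_Dv_Linf (v : vfld) (t : R) : R :=
  match Lub_Rbar (fun r : R => exists x y z : R, r = sqrt (Dv_sq v t x y z)) with
  | Finite r => r
  | _ => 0
  end.

Definition norm_DL_L2 (L : fld) (t : R) : R :=
  sqrt (int3 (fun x y z => sum3 (fun j => (dsp j L t x y z)^2))).

Definition poly6 : Type := list (R * (nat -> nat))%type.
Definition mono6 (e : nat -> nat) (X : nat -> R) : R :=
  X 0%nat ^ e 0%nat * X 1%nat ^ e 1%nat * X 2%nat ^ e 2%nat *
  X 3%nat ^ e 3%nat * X 4%nat ^ e 4%nat * X 5%nat ^ e 5%nat.
Definition deg6 (e : nat -> nat) : nat :=
  (e 0%nat + e 1%nat + e 2%nat + e 3%nat + e 4%nat + e 5%nat)%nat.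
Definition peval6 (p : poly6) (X : nat -> R) : R :=
  fold_right (fun m acc => fst m * mono6 (snd m) X + acc) 0 p.
Definition at_least_quadratic (p : poly6) : Prop :=
  List.Forall (fun m : R * (nat -> nat) => (2 <= deg6 (snd m))%nat) p.

From Stdlib Require Import Reals List Lra Lia Classical ClassicalEpsilon ZArith.
From Coquelicot Require Import Coquelicot.
Open Scope R_scope.

(* Since d/dt vbar^i = int dv^i/dt, the remainder is
   g^i = int (dv^i/dt + alpha (1 - 3K)/t v^i + K/(1+K) t^-alpha d_i L):
   the gradient d_i L has zero mean by periodicity. By the equation, the integrand is a
   sum of terms quadratic in (v, Dv, DL) whose coefficients are bounded by
   5 (1 + alpha) (t^-alpha + 1/t) because |v| <= 1. Integrating gives a bound by
   sup |v|^2 + |Dv|_oo^2 + |DL|_2^2, and the mean value theorem on the unit cube gives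
   |v - vbar| <= 3 |Dv|_oo, hence |v|^2 <= 2 |vbar|^2 + 54 |Dv|_oo^2. *)

Definition point4 : Type := R * (R * (R * R)).

Definition uncurry4 (F : fld) (p : point4) : R :=
  F (fst p) (fst (snd p)) (fst (snd (snd p))) (snd (snd (snd p))).

Lemma cont4_continuous F t x y z :
  cont4 F t x y z <-> continuous (uncurry4 F) ((t, (x, (y, z))) : point4).
Proof.
split.
- intros H P [eps HP].
  destruct (H eps (cond_pos eps)) as [d [Hd Hd']].
  exists (mkposreal d Hd); intros [t' [x' [y' z']]] [Bt [Bx [By Bz]]].
  apply HP, Hd'; assumption.
- intros H eps Heps.
  assert (Hnear : locally (uncurry4 F (t, (x, (y, z)))) (fun r => Rabs (r - F t x y z) < eps)).
  { exists (mkposreal eps Heps); intros r Hr; exact Hr. }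
  destruct (H _ Hnear) as [d Hd].
  exists d; split; [apply cond_pos|].
  intros t' x' y' z' Ht Hx Hy Hz; exact (Hd (t', (x', (y', z'))) (conj Ht (conj Hx (conj Hy Hz)))).
Qed.

Lemma cont4_plus F G t x y z : cont4 F t x y z -> cont4 G t x y z ->
  cont4 (fun t x y z => F t x y z + G t x y z) t x y z.
Proof. rewrite !cont4_continuous; exact (continuous_plus (uncurry4 F) (uncurry4 G) _). Qed.

Lemma cont4_mult F G t x y z : cont4 F t x y z -> cont4 G t x y z ->
  cont4 (fun t x y z => F t x y z * G t x y z) t x y z.
Proof. rewrite !cont4_continuous; exact (continuous_mult (uncurry4 F) (uncurry4 G) _). Qed.

Lemma cont4_const c t x y z : cont4 (fun _ _ _ _ => c) t x y z.
Proof. rewrite cont4_continuous; apply continuous_const. Qed.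

Lemma cont4_pow F n t x y z : cont4 F t x y z -> cont4 (fun t x y z => F t x y z ^ n) t x y z.
Proof. intros H; induction n; simpl; [apply cont4_const | apply cont4_mult; auto]. Qed.

Lemma cont4_sum3 (F : nat -> fld) t x y z : (forall i, (i < 3)%nat -> cont4 (F i) t x y z) ->
  cont4 (fun t x y z => sum3 (fun i => F i t x y z)) t x y z.
Proof. intros H; repeat apply cont4_plus; apply H; lia. Qed.

Lemma cont4_sections F t x y z : cont4 F t x y z ->
  continuous (fun s => F s x y z) t /\ continuous (fun s => F t s y z) x /\
  continuous (fun s => F t x s z) y /\ continuous (fun s => F t x y s) z.
Proof.
intros H; repeat split; apply continuity_pt_filterlim; intros eps Heps;
  destruct (H eps Heps) as [d [Hd Hd']]; exists d; split; auto;
  intros s [_ Hs]; apply Hd'; rewrite ?Rminus_diag, ?Rabs_R0; auto.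
Qed.

Definition slab_cont (t0 t1 : R) (F : fld) : Prop :=
  forall t x y z, t0 < t < t1 -> cont4 F t x y z.

Lemma slab_cont_plus t0 t1 F G : slab_cont t0 t1 F -> slab_cont t0 t1 G ->
  slab_cont t0 t1 (fun t x y z => F t x y z + G t x y z).
Proof. intros HF HG t x y z Ht; apply cont4_plus; auto. Qed.

Lemma slab_cont_scal t0 t1 c F : slab_cont t0 t1 F ->
  slab_cont t0 t1 (fun t x y z => c * F t x y z).
Proof. intros HF t x y z Ht; apply cont4_mult; [apply cont4_const | auto]. Qed.

Lemma slab_cont_const t0 t1 c : slab_cont t0 t1 (fun _ _ _ _ => c).
Proof. intros t x y z _; apply cont4_const. Qed.

Lemma shrink_into_slab t0 t1 t d : t0 < t < t1 -> 0 < d ->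
  exists d', 0 < d' /\ d' <= d /\ forall t', Rabs (t' - t) < d' -> t0 < t' < t1.
Proof.
intros Ht Hd; exists (Rmin d (Rmin (t - t0) (t1 - t))).
pose proof (Rmin_l d (Rmin (t - t0) (t1 - t))); pose proof (Rmin_r d (Rmin (t - t0) (t1 - t))).
pose proof (Rmin_l (t - t0) (t1 - t)); pose proof (Rmin_r (t - t0) (t1 - t)).
split; [apply Rmin_pos; [|apply Rmin_pos]; lra|].
split; [lra|]; intros t' Ht'; apply Rabs_def2 in Ht'; lra.
Qed.

Lemma slab_cont_ext t0 t1 F G : (forall t x y z, t0 < t < t1 -> F t x y z = G t x y z) ->
  slab_cont t0 t1 G -> slab_cont t0 t1 F.
Proof.
intros E HG t x y z Ht eps Heps.
destruct (HG t x y z Ht eps Heps) as [d [Hd Hd']].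
destruct (shrink_into_slab t0 t1 t d Ht Hd) as [d' [Hd'0 [Hd'd Hslab]]].
exists d'; split; auto.
intros t' x' y' z' Ht' Hx' Hy' Hz'.
rewrite !E by auto; apply Hd'; lra.
Qed.

Definition swap_yz (F : fld) : fld := fun t x y z => F t x z y.
Definition swap_xz (F : fld) : fld := fun t x y z => F t z y x.

Lemma slab_cont_swap_yz t0 t1 F : slab_cont t0 t1 F -> slab_cont t0 t1 (swap_yz F).
Proof.
intros H t x y z Ht eps Heps; destruct (H t x z y Ht eps Heps) as [d [Hd Hd']].
exists d; split; auto; intros; apply Hd'; auto.
Qed.

Lemma slab_cont_swap_xz t0 t1 F : slab_cont t0 t1 F -> slab_cont t0 t1 (swap_xz F).
Proof.
intros H t x y z Ht eps Heps; destruct (H t z y x Ht eps Heps) as [d [Hd Hd']].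
exists d; split; auto; intros; apply Hd'; auto.
Qed.

(* Compactness of [0,1]: continuity at every point of {p} x [0,1] is uniform in
   the second variable. *)
Lemma segment_uniform_continuity (P : Type) (near : R -> P -> Prop) (G : P -> R -> R) (p : P) :
  (forall d1 d2 q, 0 < d1 <= d2 -> near d1 q -> near d2 q) ->
  (forall d, 0 < d -> near d p) ->
  (forall s, 0 <= s <= 1 -> forall eps, 0 < eps -> exists d, 0 < d /\
     forall q s', near d q -> Rabs (s' - s) < d -> Rabs (G q s' - G p s) < eps) ->
  forall eps, 0 < eps -> exists d, 0 < d /\
     forall q s, near d q -> 0 <= s <= 1 -> Rabs (G q s - G p s) < eps.
Proof.
intros Hmono Hrefl Hc eps Heps.
assert (Hex : forall s, exists d : posreal, 0 <= s <= 1 ->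
   forall q s', near d q -> Rabs (s' - s) < d -> Rabs (G q s' - G p s) < eps / 2).
{ intros s; destruct (classic (0 <= s <= 1)) as [Hs|Hs].
  - destruct (Hc s Hs (eps / 2) ltac:(lra)) as [d [Hd Hd']].
    exists (mkposreal d Hd); intros _; exact Hd'.
  - exists (mkposreal 1 Rlt_0_1); intros Hs'; contradiction. }
destruct (choice _ Hex) as [delta Hdelta].
destruct (compactness_value_1d 0 1 delta) as [d Hd].
exists d; split; [apply cond_pos|].
intros q s Hq Hs.
apply NNPP; intros Hn; apply (Hd s Hs); intros [s0 [Hs0 [Hss0 Hds0]]]; apply Hn.
assert (A1 : Rabs (G q s - G p s0) < eps / 2).
{ apply Hdelta; auto; apply (Hmono d); auto; split; [apply cond_pos | lra]. }
assert (A2 : Rabs (G p s - G p s0) < eps / 2) by (apply Hdelta; auto; apply Hrefl, cond_pos).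
replace (G q s - G p s) with ((G q s - G p s0) - (G p s - G p s0)) by ring.
eapply Rle_lt_trans; [apply Rabs_triang|]; rewrite Rabs_Ropp; lra.
Qed.

Lemma RInt_unit_diff_le f g e : ex_RInt f 0 1 -> ex_RInt g 0 1 ->
  (forall s, 0 <= s <= 1 -> Rabs (f s - g s) <= e) ->
  Rabs (RInt f 0 1 - RInt g 0 1) <= e.
Proof.
intros Hf Hg H.
replace (RInt f 0 1 - RInt g 0 1) with (RInt (fun s => f s - g s) 0 1)
  by exact (RInt_minus f g 0 1 Hf Hg).
replace e with ((1 - 0) * e) by ring.
apply abs_RInt_le_const; [lra | apply (ex_RInt_minus f g); auto | exact H].
Qed.

Definition int_z (F : fld) : fld := fun t x y _ => RInt (fun s => F t x y s) 0 1.

Lemma slab_cont_ex_RInt t0 t1 F t x y : slab_cont t0 t1 F -> t0 < t < t1 ->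
  ex_RInt (fun s => F t x y s) 0 1.
Proof.
intros H Ht; apply (@ex_RInt_continuous R_CompleteNormedModule).
intros s _; apply (cont4_sections F t x y s), H, Ht.
Qed.

Lemma slab_cont_int_z t0 t1 F : slab_cont t0 t1 F -> slab_cont t0 t1 (int_z F).
Proof.
intros H t x y z Ht eps Heps.
set (near := fun d (q : R * (R * R)) => Rabs (fst q - t) < d /\ Rabs (fst (snd q) - x) < d /\
   Rabs (snd (snd q) - y) < d /\ t0 < fst q < t1).
destruct (segment_uniform_continuity _ near (fun q s => F (fst q) (fst (snd q)) (snd (snd q)) s)
  (t, (x, y))) with (eps := eps / 2) as [d [Hd Hd']].
- intros d1 d2 [t' [x' y']] Hd12 [A [B [C D]]]; unfold near; simpl in *; repeat split; lra.
- intros d Hd; unfold near; simpl; rewrite !Rminus_diag, !Rabs_R0; repeat split; lra.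
- intros s Hs e He; destruct (H t x y s Ht e He) as [d [Hd Hd']].
  exists d; split; auto; intros [t' [x' y']] s' [A [B [C D]]] Hs'; simpl in *; apply Hd'; auto.
- lra.
- destruct (shrink_into_slab t0 t1 t d Ht Hd) as [d' [Hd'0 [Hd'd Hslab]]].
  exists d'; split; auto.
  intros t' x' y' z' Ht' Hx' Hy' _.
  specialize (Hslab t' Ht').
  apply Rle_lt_trans with (eps / 2); [|lra].
  apply RInt_unit_diff_le; try (apply (slab_cont_ex_RInt t0 t1); auto).
  intros s Hs; left; apply (Hd' (t', (x', y')) s); auto; unfold near; simpl; repeat split; lra.
Qed.

Definition slab_time_C1 (t0 t1 : R) (F : fld) : Prop :=
  slab_cont t0 t1 F /\ slab_cont t0 t1 (pd 0 F) /\
  forall t x y z, t0 < t < t1 -> ex_pd 0 F t x y z.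

Lemma is_derive_int_z t0 t1 F t x y z : slab_time_C1 t0 t1 F -> t0 < t < t1 ->
  is_derive (fun u => int_z F u x y z) t (int_z (pd 0 F) t x y z).
Proof.
intros [HC [HC' HE]] Ht.
apply (is_derive_RInt_param (fun u s => F u x y s) 0 1 t).
- apply (locally_interval _ t t0 t1); simpl; try lra.
  intros u Hu0 Hu1 s _; apply HE; lra.
- intros s _ eps; destruct (HC' t x y s Ht eps (cond_pos eps)) as [d [Hd Hd']].
  exists (mkposreal d Hd); intros u w Hu Hw.
  apply Hd'; auto; rewrite Rminus_diag, Rabs_R0; auto.
- apply (locally_interval _ t t0 t1); simpl; try lra.
  intros u Hu0 Hu1; apply (slab_cont_ex_RInt t0 t1); auto; lra.
Qed.

Lemma pd0_int_z t0 t1 F t x y z : slab_time_C1 t0 t1 F -> t0 < t < t1 ->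
  pd 0 (int_z F) t x y z = int_z (pd 0 F) t x y z.
Proof. intros; apply is_derive_unique, (is_derive_int_z t0 t1); auto. Qed.

Lemma slab_time_C1_int_z t0 t1 F : slab_time_C1 t0 t1 F -> slab_time_C1 t0 t1 (int_z F).
Proof.
intros HD; pose proof HD as [HC [HC' HE]]; split; [|split].
- apply slab_cont_int_z; auto.
- apply (slab_cont_ext _ _ _ (int_z (pd 0 F))).
  + intros; apply (pd0_int_z t0 t1); auto.
  + apply slab_cont_int_z; auto.
- intros t x y z Ht; eexists; apply (is_derive_int_z t0 t1); auto.
Qed.

Lemma slab_time_C1_swap_yz t0 t1 F : slab_time_C1 t0 t1 F -> slab_time_C1 t0 t1 (swap_yz F).
Proof.
intros [HC [HC' HE]]; split; [|split].
- apply slab_cont_swap_yz; auto.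
- apply (slab_cont_swap_yz _ _ (pd 0 F)); auto.
- intros t x y z Ht; apply (HE t x z y Ht).
Qed.

Lemma slab_time_C1_swap_xz t0 t1 F : slab_time_C1 t0 t1 F -> slab_time_C1 t0 t1 (swap_xz F).
Proof.
intros [HC [HC' HE]]; split; [|split].
- apply slab_cont_swap_xz; auto.
- apply (slab_cont_swap_xz _ _ (pd 0 F)); auto.
- intros t x y z Ht; apply (HE t z y x Ht).
Qed.

Definition int_y (F : fld) : fld := swap_yz (int_z (swap_yz F)).
Definition int_x (F : fld) : fld := swap_xz (int_z (swap_xz F)).

Lemma slab_time_C1_int_y t0 t1 F : slab_time_C1 t0 t1 F -> slab_time_C1 t0 t1 (int_y F).
Proof. intros; apply slab_time_C1_swap_yz, slab_time_C1_int_z, slab_time_C1_swap_yz; auto. Qed.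

Lemma pd0_int_y t0 t1 F t x y z : slab_time_C1 t0 t1 F -> t0 < t < t1 ->
  pd 0 (int_y F) t x y z = int_y (pd 0 F) t x y z.
Proof. intros; apply (pd0_int_z t0 t1 (swap_yz F) t x z y); auto; apply slab_time_C1_swap_yz; auto. Qed.

Lemma is_derive_int_x t0 t1 F t x y z : slab_time_C1 t0 t1 F -> t0 < t < t1 ->
  is_derive (fun u => int_x F u x y z) t (int_x (pd 0 F) t x y z).
Proof. intros; apply (is_derive_int_z t0 t1 (swap_xz F) t z y x); auto; apply slab_time_C1_swap_xz; auto. Qed.

Lemma is_derive_int3 t0 t1 F t : slab_time_C1 t0 t1 F -> t0 < t < t1 ->
  is_derive (fun u => int3 (F u)) t (int3 (pd 0 F t)).
Proof.
intros HD Ht.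
assert (HZ := slab_time_C1_int_z _ _ _ HD).
(* [int3 (F u)] is convertible to [int_x (int_y (int_z F)) u 0 0 0]. *)
replace (int3 (pd 0 F t)) with (int_x (pd 0 (int_y (int_z F))) t 0 0 0).
- exact (is_derive_int_x t0 t1 _ t 0 0 0 (slab_time_C1_int_y _ _ _ HZ) Ht).
- apply RInt_ext; intros s _; unfold swap_xz at 1.
  rewrite (pd0_int_y t0 t1) by auto.
  apply RInt_ext; intros r _; unfold swap_yz at 1.
  apply (pd0_int_z t0 t1); auto.
Qed.

Lemma RInt_unit_const (c : R) : RInt (fun _ => c) 0 1 = c.
Proof. rewrite RInt_const; unfold scal; simpl; unfold mult; simpl; ring. Qed.

Lemma RInt_unit_zero (f : R -> R) : (forall s, 0 < s < 1 -> f s = 0) -> RInt f 0 1 = 0.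
Proof.
intros H; transitivity (RInt (fun _ => 0) 0 1); [|apply RInt_unit_const].
apply RInt_ext; rewrite Rmin_left, Rmax_right by lra; exact H.
Qed.

Lemma RInt_plus_R (f g : R -> R) a b : ex_RInt f a b -> ex_RInt g a b ->
  RInt (fun s => f s + g s) a b = RInt f a b + RInt g a b.
Proof. exact (RInt_plus f g a b). Qed.

Lemma RInt_scal_R (f : R -> R) a b c : ex_RInt f a b ->
  RInt (fun s => c * f s) a b = c * RInt f a b.
Proof. exact (RInt_scal f a b c). Qed.

Lemma int3_const c : int3 (fun _ _ _ => c) = c.
Proof. unfold int3; rewrite !RInt_unit_const; reflexivity. Qed.

Section Int3.
Variables t0 t1 t : R.
Hypothesis Ht : t0 < t < t1.

Lemma ex_RInt_int3_z F x y : slab_cont t0 t1 F -> ex_RInt (fun z => F t x y z) 0 1.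
Proof. intros; apply (slab_cont_ex_RInt t0 t1); auto. Qed.

Lemma ex_RInt_int3_y F x : slab_cont t0 t1 F ->
  ex_RInt (fun y => RInt (fun z => F t x y z) 0 1) 0 1.
Proof.
intros H; apply (slab_cont_ex_RInt t0 t1 (swap_yz (int_z F)) t x 0); auto.
apply slab_cont_swap_yz, slab_cont_int_z; auto.
Qed.

Lemma ex_RInt_int3_x F : slab_cont t0 t1 F ->
  ex_RInt (fun x => RInt (fun y => RInt (fun z => F t x y z) 0 1) 0 1) 0 1.
Proof.
intros H; apply (slab_cont_ex_RInt t0 t1 (swap_xz (int_y (int_z F))) t 0 0); auto.
apply slab_cont_swap_xz, slab_cont_swap_yz, slab_cont_int_z, slab_cont_swap_yz, slab_cont_int_z; auto.
Qed.

Lemma int3_plus F G : slab_cont t0 t1 F -> slab_cont t0 t1 G ->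
  int3 (fun x y z => F t x y z + G t x y z) = int3 (F t) + int3 (G t).
Proof.
intros HF HG; unfold int3.
rewrite <- (RInt_plus_R _ _ 0 1 (ex_RInt_int3_x F HF) (ex_RInt_int3_x G HG)).
apply RInt_ext; intros x _.
rewrite <- (RInt_plus_R _ _ 0 1 (ex_RInt_int3_y F x HF) (ex_RInt_int3_y G x HG)).
apply RInt_ext; intros y _.
exact (RInt_plus_R _ _ 0 1 (ex_RInt_int3_z F x y HF) (ex_RInt_int3_z G x y HG)).
Qed.

Lemma int3_scal c F : slab_cont t0 t1 F ->
  int3 (fun x y z => c * F t x y z) = c * int3 (F t).
Proof.
intros HF; unfold int3.
rewrite <- (RInt_scal_R _ 0 1 c (ex_RInt_int3_x F HF)).
apply RInt_ext; intros x _.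
rewrite <- (RInt_scal_R _ 0 1 c (ex_RInt_int3_y F x HF)).
apply RInt_ext; intros y _.
exact (RInt_scal_R _ 0 1 c (ex_RInt_int3_z F x y HF)).
Qed.

Lemma int3_le F G : slab_cont t0 t1 F -> slab_cont t0 t1 G ->
  (forall x y z, 0 <= x <= 1 -> 0 <= y <= 1 -> 0 <= z <= 1 -> F t x y z <= G t x y z) ->
  int3 (F t) <= int3 (G t).
Proof.
intros HF HG H; unfold int3.
apply RInt_le; [lra | apply ex_RInt_int3_x; auto .. |]; intros x Hx.
apply RInt_le; [lra | apply ex_RInt_int3_y; auto .. |]; intros y Hy.
apply RInt_le; [lra | apply ex_RInt_int3_z; auto .. |]; intros z Hz.
apply H; lra.
Qed.

Lemma abs_int3_le F G : slab_cont t0 t1 F -> slab_cont t0 t1 G ->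
  (forall x y z, 0 <= x <= 1 -> 0 <= y <= 1 -> 0 <= z <= 1 -> Rabs (F t x y z) <= G t x y z) ->
  Rabs (int3 (F t)) <= int3 (G t).
Proof.
intros HF HG H; apply Rabs_le; split.
- assert (Hneg : int3 (fun x y z => -1 * F t x y z) <= int3 (G t)).
  { apply (int3_le (fun t x y z => -1 * F t x y z) G); auto; [apply slab_cont_scal; auto|].
    intros x y z Hx Hy Hz; specialize (H x y z Hx Hy Hz); apply Rabs_le_between in H; lra. }
  rewrite (int3_scal (-1) F HF) in Hneg; lra.
- apply int3_le; auto.
  intros x y z Hx Hy Hz; specialize (H x y z Hx Hy Hz); apply Rabs_le_between in H; lra.
Qed.

End Int3.

(* [freeze_time k F t] fixes the time at [t] and lets its first argument play the
   role of the spatial variable [x^k]; this turns spatial derivatives into time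
   derivatives, to which the results above apply. *)
Definition freeze_time (k : nat) (F : fld) (t : R) : fld := fun a x y z =>
  match k with
  | 1%nat => F t a y z
  | 2%nat => F t x a z
  | _ => F t x y a
  end.

Lemma slab_time_C1_freeze_time t0 t1 k F t a0 a1 : smooth_on t0 t1 F -> t0 < t < t1 ->
  slab_time_C1 a0 a1 (freeze_time k F t).
Proof.
intros HF Ht.
assert (Hc : forall ds x y z, cont4 (pdl ds F) t x y z)
  by (intros; exact (proj1 (HF ds 0%nat t x y z Ht))).
split; [|split].
- intros a x y z _ eps Heps.
  destruct k as [|[|[|k]]]; simpl;
  [ destruct (Hc nil x y a eps Heps) as [d [Hd Hd']]
  | destruct (Hc nil a y z eps Heps) as [d [Hd Hd']]
  | destruct (Hc nil x a z eps Heps) as [d [Hd Hd']]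
  | destruct (Hc nil x y a eps Heps) as [d [Hd Hd']] ];
  exists d; split; auto; intros; apply Hd'; rewrite ?Rminus_diag, ?Rabs_R0; auto.
- intros a x y z _ eps Heps.
  destruct k as [|[|[|k]]]; simpl;
  [ destruct (Hc (3%nat :: nil) x y a eps Heps) as [d [Hd Hd']]
  | destruct (Hc (1%nat :: nil) a y z eps Heps) as [d [Hd Hd']]
  | destruct (Hc (2%nat :: nil) x a z eps Heps) as [d [Hd Hd']]
  | destruct (Hc (3%nat :: nil) x y a eps Heps) as [d [Hd Hd']] ];
  exists d; split; auto; intros; apply Hd'; rewrite ?Rminus_diag, ?Rabs_R0; auto.
- intros a x y z _.
  destruct k as [|[|[|k]]]; simpl;
  [ exact (proj2 (HF nil 3%nat t x y a Ht))
  | exact (proj2 (HF nil 1%nat t a y z Ht))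
  | exact (proj2 (HF nil 2%nat t x a z Ht))
  | exact (proj2 (HF nil 3%nat t x y a Ht)) ].
Qed.

Lemma RInt_pd0_periodic a0 a1 G x y z : a0 < 0 -> 1 < a1 -> slab_time_C1 a0 a1 G ->
  G 1 x y z = G 0 x y z -> RInt (fun a => pd 0 G a x y z) 0 1 = 0.
Proof.
intros Ha0 Ha1 [_ [HC' HE]] Hper.
change (RInt (Derive (fun a => G a x y z)) 0 1 = 0).
rewrite RInt_Derive, Hper; [unfold minus, plus, opp; simpl; ring | |];
  rewrite Rmin_left, Rmax_right by lra; intros a Ha.
- apply (HE a x y z); lra.
- apply (cont4_sections (pd 0 G) a x y z), HC'; lra.
Qed.

Section MeanZero.
Variables (t0 t1 t : R) (F : fld).
Hypothesis HF : smooth_on t0 t1 F.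
Hypothesis Hper : periodic F.
Hypothesis Ht : t0 < t < t1.

Let HC1 k : slab_time_C1 (-1) 2 (freeze_time k F t) :=
  slab_time_C1_freeze_time t0 t1 k F t (-1) 2 HF Ht.

Lemma RInt_dsp2_periodic x y : RInt (fun z => dsp 2 F t x y z) 0 1 = 0.
Proof.
apply (RInt_pd0_periodic (-1) 2 (freeze_time 3 F t) x y 0); [lra | lra | apply HC1 |].
simpl; rewrite <- (Rplus_0_l 1); apply Hper.
Qed.

Lemma RInt_dsp1_periodic x : RInt (fun y => RInt (fun z => dsp 1 F t x y z) 0 1) 0 1 = 0.
Proof.
transitivity (RInt (fun a => pd 0 (int_z (freeze_time 2 F t)) a x 0 0) 0 1).
- apply RInt_ext; intros a Ha; rewrite Rmin_left, Rmax_right in Ha by lra.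
  symmetry; apply (pd0_int_z (-1) 2); [apply HC1 | lra].
- apply (RInt_pd0_periodic (-1) 2); [lra | lra | apply slab_time_C1_int_z, HC1 |].
  apply RInt_ext; intros s _; simpl; rewrite <- (Rplus_0_l 1); apply Hper.
Qed.

Lemma int3_dsp0_periodic : int3 (dsp 0 F t) = 0.
Proof.
transitivity (RInt (fun a => pd 0 (int_y (int_z (freeze_time 1 F t))) a 0 0 0) 0 1).
- apply RInt_ext; intros a Ha; rewrite Rmin_left, Rmax_right in Ha by lra.
  rewrite (pd0_int_y (-1) 2) by (try apply slab_time_C1_int_z, HC1; lra).
  apply RInt_ext; intros s _; unfold swap_yz at 1.
  symmetry; apply (pd0_int_z (-1) 2); [apply HC1 | lra].
- apply (RInt_pd0_periodic (-1) 2); [lra | lra | apply slab_time_C1_int_y, slab_time_C1_int_z, HC1 |].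
  apply RInt_ext; intros s _; apply RInt_ext; intros r _; simpl.
  rewrite <- (Rplus_0_l 1); apply Hper.
Qed.

Lemma int3_dsp_periodic j : (j < 3)%nat -> int3 (dsp j F t) = 0.
Proof.
intros Hj; destruct j as [|[|[|j]]]; try lia.
- apply int3_dsp0_periodic.
- apply RInt_unit_zero; intros x _; apply RInt_dsp1_periodic.
- apply RInt_unit_zero; intros x _; apply RInt_unit_zero; intros y _; apply RInt_dsp2_periodic.
Qed.

End MeanZero.

Lemma In_abs_le_sum_abs {A : Type} (h : A -> R) (l : list A) p : In p l ->
  Rabs (h p) <= fold_right (fun q acc => Rabs (h q) + acc) 0 l.
Proof.
assert (Hpos : forall l, 0 <= fold_right (fun q acc => Rabs (h q) + acc) 0 l).
{ intros l'; induction l' as [|a l' IH]; simpl; [lra|]; pose proof (Rabs_pos (h a)); lra. }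
induction l as [|a l IH]; simpl; intros Hp; [contradiction|].
pose proof (Rabs_pos (h a)); specialize (Hpos l).
destruct Hp as [<-|Hp]; [lra | specialize (IH Hp); lra].
Qed.

Lemma bounded_on_unit_cube (F : fld) t : (forall x y z, cont4 F t x y z) ->
  exists B, forall x y z, 0 <= x <= 1 -> 0 <= y <= 1 -> 0 <= z <= 1 -> Rabs (F t x y z) <= B.
Proof.
intros HF.
set (h := fun p : Compactness.Tn 3 R => F t (fst p) (fst (snd p)) (fst (snd (snd p)))).
assert (Hex : forall p, exists d : posreal, forall q,
   close_n 3 d q p -> Rabs (h q - h p) < 1).
{ intros [x [y [z u]]]; destruct (HF x y z 1 Rlt_0_1) as [d [Hd Hd']].
  exists (mkposreal d Hd); intros [x' [y' [z' u']]] [A [B [C _]]]; unfold h; simpl in *.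
  apply Hd'; auto; rewrite Rminus_diag, Rabs_R0; auto. }
destruct (choice _ Hex) as [delta Hdelta].
apply NNPP; intros Hn.
apply (compactness_list 3 (0, (0, (0, tt))) (1, (1, (1, tt))) delta); intros [l Hl]; apply Hn.
exists (fold_right (fun p acc => Rabs (h p) + acc) 0 l + 1).
intros x y z Hx Hy Hz.
destruct (Hl (x, (y, (z, tt)))) as [p [Hp [_ Hc]]]; [simpl; repeat split; lra|].
specialize (Hdelta p _ Hc); pose proof (In_abs_le_sum_abs h l p Hp).
change (F t x y z) with (h (x, (y, (z, tt)))).
pose proof (Rabs_triang_inv (h (x, (y, (z, tt)))) (h p)); lra.
Qed.

Lemma periodic_shift_nat (f : R -> R) : (forall x, f (x + 1) = f x) ->
  forall n x, f (x + INR n) = f x.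
Proof.
intros H n; induction n as [|n IH]; intros x; [simpl; rewrite Rplus_0_r; auto|].
rewrite S_INR; replace (x + (INR n + 1)) with ((x + INR n) + 1) by ring; rewrite H; auto.
Qed.

Lemma periodic_unit_representative (f : R -> R) : (forall x, f (x + 1) = f x) ->
  forall x, exists x', 0 <= x' <= 1 /\ f x = f x'.
Proof.
intros H x; destruct (archimed x) as [A B].
exists (x - (IZR (up x) - 1)); split; [lra|].
destruct (Z_le_gt_dec 1 (up x)) as [Hz|Hz].
- replace (IZR (up x) - 1) with (INR (Z.to_nat (up x - 1)))
    by (rewrite INR_IZR_INZ, Z2Nat.id, minus_IZR by lia; reflexivity).
  rewrite <- (periodic_shift_nat f H (Z.to_nat (up x - 1)) (x - _)); f_equal; ring.
- replace (IZR (up x) - 1) with (- INR (Z.to_nat (1 - up x)))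
    by (rewrite INR_IZR_INZ, Z2Nat.id, minus_IZR by lia; simpl; ring).
  rewrite <- (periodic_shift_nat f H (Z.to_nat (1 - up x)) x); f_equal; ring.
Qed.

Lemma bounded_periodic (F : fld) t : (forall x y z, cont4 F t x y z) -> periodic F ->
  exists B, forall x y z, Rabs (F t x y z) <= B.
Proof.
intros HF HP; destruct (bounded_on_unit_cube F t HF) as [B HB]; exists B; intros x y z.
destruct (periodic_unit_representative (fun s => F t s y z) (fun s => proj1 (HP t s y z)) x)
  as [x' [Hx' E1]].
destruct (periodic_unit_representative (fun s => F t x' s z) (fun s => proj1 (proj2 (HP t x' s z))) y)
  as [y' [Hy' E2]].
destruct (periodic_unit_representative (fun s => F t x' y' s) (fun s => proj2 (proj2 (HP t x' y' s))) z)
  as [z' [Hz' E3]].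
simpl in *; rewrite E1, E2, E3; apply HB; auto.
Qed.

Lemma periodic_dsp j F : periodic F -> (j < 3)%nat -> periodic (dsp j F).
Proof.
intros HP Hj t x y z; destruct j as [|[|[|j]]]; try lia; unfold dsp, pd; simpl;
  repeat split; try (apply Derive_ext; intros s; apply HP);
  unfold Derive; f_equal; apply Lim_ext; intros h.
- replace (x + 1 + h) with ((x + h) + 1) by ring; rewrite !(proj1 (HP _ _ _ _)); reflexivity.
- replace (y + 1 + h) with ((y + h) + 1) by ring; rewrite !(proj1 (proj2 (HP _ _ _ _))); reflexivity.
- replace (z + 1 + h) with ((z + h) + 1) by ring; rewrite !(proj2 (proj2 (HP _ _ _ _))); reflexivity.
Qed.

Lemma le_Lub_Rbar_real (E : R -> Prop) B r : (forall s, E s -> s <= B) -> E r ->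
  r <= match Lub_Rbar E with Finite m => m | _ => 0 end.
Proof.
intros HB Hr; destruct (Lub_Rbar_correct E) as [Hub Hlub].
assert (Hle : Rbar_le (Lub_Rbar E) (Finite B)) by (apply Hlub; intros s Hs; apply HB, Hs).
specialize (Hub r Hr); destruct (Lub_Rbar E); simpl in *; tauto.
Qed.

Lemma abs_diff_le_of_Derive_bound (f : R -> R) M a b :
  (forall s, ex_derive f s) -> (forall s, continuous f s) -> (forall s, Rabs (Derive f s) <= M) ->
  0 <= a <= 1 -> 0 <= b <= 1 -> Rabs (f b - f a) <= M.
Proof.
intros Hd Hc HM Ha Hb.
destruct (MVT_gen f a b (Derive f)) as [c [_ Hc']].
- intros s _; apply Derive_correct; auto.
- intros s _; apply continuity_pt_filterlim, Hc.
- rewrite Hc', Rabs_mult; pose proof (HM c); pose proof (Rabs_pos (Derive f c)).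
  assert (Rabs (b - a) <= 1) by (apply Rabs_le; lra).
  pose proof (Rabs_pos (b - a)); nra.
Qed.

Section Oscillation.
Variables (t0 t1 t : R) (F : fld) (M : R).
Hypothesis HF : smooth_on t0 t1 F.
Hypothesis Ht : t0 < t < t1.
Hypothesis HM : forall j x y z, (j < 3)%nat -> Rabs (dsp j F t x y z) <= M.

Let ex_dsp k x y z : ex_pd k F t x y z := proj2 (HF nil k t x y z Ht).
Let cont_F x y z : cont4 F t x y z := proj1 (HF nil 0%nat t x y z Ht).

(* Move from one point of the unit cube to another one coordinate at a time. *)
Lemma oscillation_on_unit_cube x y z x' y' z' :
  0 <= x <= 1 -> 0 <= y <= 1 -> 0 <= z <= 1 ->
  0 <= x' <= 1 -> 0 <= y' <= 1 -> 0 <= z' <= 1 ->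
  Rabs (F t x' y' z' - F t x y z) <= 3 * M.
Proof.
intros Hx Hy Hz Hx' Hy' Hz'.
assert (A1 : Rabs (F t x' y z - F t x y z) <= M).
{ apply (abs_diff_le_of_Derive_bound (fun s => F t s y z)); auto.
  - intros s; exact (ex_dsp 1 s y z).
  - intros s; apply (cont4_sections F t s y z), cont_F.
  - intros s; exact (HM 0 s y z ltac:(lia)). }
assert (A2 : Rabs (F t x' y' z - F t x' y z) <= M).
{ apply (abs_diff_le_of_Derive_bound (fun s => F t x' s z)); auto.
  - intros s; exact (ex_dsp 2 x' s z).
  - intros s; apply (cont4_sections F t x' s z), cont_F.
  - intros s; exact (HM 1 x' s z ltac:(lia)). }
assert (A3 : Rabs (F t x' y' z' - F t x' y' z) <= M).
{ apply (abs_diff_le_of_Derive_bound (fun s => F t x' y' s)); auto.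
  - intros s; exact (ex_dsp 3 x' y' s).
  - intros s; apply (cont4_sections F t x' y' s), cont_F.
  - intros s; exact (HM 2 x' y' s ltac:(lia)). }
replace (F t x' y' z' - F t x y z) with
  ((F t x' y' z' - F t x' y' z) + (F t x' y' z - F t x' y z) + (F t x' y z - F t x y z)) by ring.
pose proof (Rabs_triang (F t x' y' z' - F t x' y' z + (F t x' y' z - F t x' y z)) (F t x' y z - F t x y z)).
pose proof (Rabs_triang (F t x' y' z' - F t x' y' z) (F t x' y' z - F t x' y z)).
lra.
Qed.

Lemma deviation_from_mean x y z : 0 <= x <= 1 -> 0 <= y <= 1 -> 0 <= z <= 1 ->
  Rabs (F t x y z - int3 (F t)) <= 3 * M.
Proof.
intros Hx Hy Hz.
assert (HC : slab_cont t0 t1 F) by (intros t' x' y' z' Ht'; exact (proj1 (HF nil 0%nat t' x' y' z' Ht'))).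
assert (Hosc := oscillation_on_unit_cube x y z).
apply Rabs_le; split.
- assert (int3 (F t) <= int3 (fun _ _ _ => F t x y z + 3 * M)); [|rewrite int3_const in *; lra].
  apply (int3_le t0 t1 t Ht F (fun _ _ _ _ => F t x y z + 3 * M)); auto; [apply slab_cont_const|].
  intros x' y' z' Hx' Hy' Hz'; specialize (Hosc x' y' z' Hx Hy Hz Hx' Hy' Hz').
  apply Rabs_le_between in Hosc; lra.
- assert (int3 (fun _ _ _ => F t x y z - 3 * M) <= int3 (F t)); [|rewrite int3_const in *; lra].
  apply (int3_le t0 t1 t Ht (fun _ _ _ _ => F t x y z - 3 * M)); auto; [apply slab_cont_const|].
  intros x' y' z' Hx' Hy' Hz'; specialize (Hosc x' y' z' Hx Hy Hz Hx' Hy' Hz').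
  apply Rabs_le_between in Hosc; lra.
Qed.

End Oscillation.

Lemma sum3_sq_nonneg (f : nat -> R) : 0 <= sum3 (fun j => f j ^ 2).
Proof. unfold sum3; pose proof (pow2_ge_0 (f 0%nat)); pose proof (pow2_ge_0 (f 1%nat)); pose proof (pow2_ge_0 (f 2%nat)); lra. Qed.

Lemma le_sum3 (f : nat -> R) i : (forall j, (j < 3)%nat -> 0 <= f j) -> (i < 3)%nat ->
  f i <= sum3 f.
Proof.
intros Hf Hi; unfold sum3.
pose proof (Hf 0%nat ltac:(lia)); pose proof (Hf 1%nat ltac:(lia)); pose proof (Hf 2%nat ltac:(lia)).
destruct i as [|[|[|i]]]; try lia; lra.
Qed.

Lemma sq_le_sum3_sq (f : nat -> R) j : (j < 3)%nat -> f j ^ 2 <= sum3 (fun j => f j ^ 2).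
Proof. apply (le_sum3 (fun j => f j ^ 2)); intros; apply pow2_ge_0. Qed.

Lemma abs_mul_le_half_sq a b : Rabs (a * b) <= (a ^ 2 + b ^ 2) / 2.
Proof.
rewrite Rabs_mult, <- (pow2_abs a), <- (pow2_abs b).
pose proof (pow2_ge_0 (Rabs a - Rabs b)); nra.
Qed.

Lemma abs_sum3_mul_le (f g : nat -> R) W N :
  (forall j, (j < 3)%nat -> f j ^ 2 <= W) -> (forall j, (j < 3)%nat -> g j ^ 2 <= N) ->
  Rabs (sum3 (fun j => f j * g j)) <= 3 * (W + N) / 2.
Proof.
intros Hf Hg; unfold sum3.
pose proof (abs_mul_le_half_sq (f 0%nat) (g 0%nat)); pose proof (Hf 0%nat ltac:(lia)); pose proof (Hg 0%nat ltac:(lia)).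
pose proof (abs_mul_le_half_sq (f 1%nat) (g 1%nat)); pose proof (Hf 1%nat ltac:(lia)); pose proof (Hg 1%nat ltac:(lia)).
pose proof (abs_mul_le_half_sq (f 2%nat) (g 2%nat)); pose proof (Hf 2%nat ltac:(lia)); pose proof (Hg 2%nat ltac:(lia)).
pose proof (Rabs_triang (f 0%nat * g 0%nat + f 1%nat * g 1%nat) (f 2%nat * g 2%nat)).
pose proof (Rabs_triang (f 0%nat * g 0%nat) (f 1%nat * g 1%nat)).
lra.
Qed.

Lemma abs_le_1_of_sq_le_1 a : a ^ 2 <= 1 -> Rabs a <= 1.
Proof. intros H; rewrite <- pow2_abs in H; pose proof (Rabs_pos a); nra. Qed.

Lemma abs_scal_le c C X B : 0 <= c <= C -> Rabs X <= B -> Rabs (c * X) <= C * B.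
Proof.
intros Hc HX; rewrite Rabs_mult, Rabs_pos_eq by lra.
apply Rmult_le_compat; auto using Rabs_pos; lra.
Qed.

Lemma div_in_unit_interval a b : 0 <= a <= b -> 0 < b -> 0 <= a / b <= 1.
Proof.
intros Hab Hb; split; [apply Rdiv_le_0_compat; lra|].
apply Rmult_le_reg_r with b; auto; unfold Rdiv; rewrite Rmult_assoc, Rinv_l; lra.
Qed.

Section EulerSource.
Variables (alpha K t ta : R).
Hypothesis Halpha : 0 < alpha.
Hypothesis HK : 0 <= K <= 1/3.
Hypothesis Ht : 0 < t.
Hypothesis Hta : 0 < ta.
Variables (u dL : nat -> R) (du : nat -> nat -> R) (w2 l2 M : R).
Hypothesis Hw2 : 0 <= w2 <= 1.
Hypothesis Hu : forall j, (j < 3)%nat -> u j ^ 2 <= w2.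
Hypothesis HdL : forall j, (j < 3)%nat -> dL j ^ 2 <= l2.
Hypothesis Hdu : forall j k, (j < 3)%nat -> (k < 3)%nat -> du j k ^ 2 <= M ^ 2.
Let q := (1 - K) / (1 - K * w2).

Lemma q_in_unit_interval : 0 <= q <= 1.
Proof. apply div_in_unit_interval; nra. Qed.

Lemma uu_sq_le i j : (i < 3)%nat -> (j < 3)%nat -> (u i * u j) ^ 2 <= w2.
Proof.
intros Hi Hj; pose proof (Hu i Hi); pose proof (Hu j Hj).
pose proof (pow2_ge_0 (u i)); pose proof (pow2_ge_0 (u j)).
replace ((u i * u j) ^ 2) with (u i ^ 2 * u j ^ 2) by ring.
apply Rle_trans with (w2 * 1); [apply Rmult_le_compat|]; lra.
Qed.

Lemma pressure_term_bound i : (i < 3)%nat ->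
  Rabs (K / (1 + K) * ta * (w2 * dL i)) <= ta * ((w2 + l2) / 2).
Proof.
intros Hi; pose proof (div_in_unit_interval K (1 + K) ltac:(lra) ltac:(lra)).
apply abs_scal_le; [split; nra|].
pose proof (HdL i Hi); eapply Rle_trans; [apply abs_mul_le_half_sq | nra].
Qed.

Lemma transport_term_bound i : (i < 3)%nat ->
  Rabs (ta * - sum3 (fun j => u j * du i j)) <= ta * (3 * (w2 + M ^ 2) / 2).
Proof.
intros Hi; apply abs_scal_le; [lra|]; rewrite Rabs_Ropp.
apply abs_sum3_mul_le; auto.
Qed.

Lemma divergence_term_bound i : (i < 3)%nat ->
  Rabs (ta * (1 - q) * (u i * sum3 (fun j => du j j))) <= ta * (3 * (w2 + M ^ 2) / 2).
Proof.
intros Hi; pose proof q_in_unit_interval.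
apply abs_scal_le; [split; nra|].
replace (u i * sum3 (fun j => du j j)) with (sum3 (fun j => u i * du j j)) by (unfold sum3; ring).
apply abs_sum3_mul_le; auto.
Qed.

Lemma convection_term_bound i : (i < 3)%nat ->
  Rabs (ta * ((1 - K) / (1 + K)) * (1 - q) * (u i * sum3 (fun j => u j * dL j)))
  <= ta * (3 * (w2 + l2) / 2).
Proof.
intros Hi; pose proof q_in_unit_interval.
pose proof (div_in_unit_interval (1 - K) (1 + K) ltac:(lra) ltac:(lra)).
assert (0 <= ta * ((1 - K) / (1 + K)) <= ta) by (split; nra).
apply abs_scal_le; [split; nra|].
replace (u i * sum3 (fun j => u j * dL j)) with (sum3 (fun j => (u i * u j) * dL j))
  by (unfold sum3; ring).
apply abs_sum3_mul_le; auto using uu_sq_le.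
Qed.

Lemma damping_term_bound i : (i < 3)%nat ->
  Rabs (alpha * (1 - 3 * K) / t * q * (w2 * u i)) <= alpha / t * w2.
Proof.
intros Hi; pose proof q_in_unit_interval.
assert (0 <= (1 - 3 * K) * q <= 1) by (split; nra).
assert (0 < alpha / t) by (apply Rdiv_lt_0_compat; lra).
replace (alpha * (1 - 3 * K) / t * q) with (alpha / t * ((1 - 3 * K) * q)) by (unfold Rdiv; ring).
apply abs_scal_le; [split; nra|].
pose proof (abs_le_1_of_sq_le_1 (u i) ltac:(pose proof (Hu i Hi); lra)).
rewrite Rabs_mult, Rabs_pos_eq by lra; nra.
Qed.

Lemma euler_source_bound i dtv : (i < 3)%nat ->
  dtv = - (alpha * (1 - 3 * K) / t) * u i
        - K / (1 + K) * ta * (1 - w2) * dL i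
        - ta * sum3 (fun j => u j * du i j)
        + ta * (1 - q) * u i * sum3 (fun j => du j j)
        + ta * (1 - K) / (1 + K) * (1 - q) * u i * sum3 (fun j => u j * dL j)
        + alpha * (1 - 3 * K) / t * q * w2 * u i ->
  Rabs (dtv + alpha * (1 - 3 * K) / t * u i + K / (1 + K) * ta * dL i)
  <= 5 * (1 + alpha) * (ta + 1 / t) * (w2 + M ^ 2 + l2).
Proof.
intros Hi ->.
pose proof (pressure_term_bound i Hi); pose proof (transport_term_bound i Hi).
pose proof (divergence_term_bound i Hi); pose proof (convection_term_bound i Hi).
pose proof (damping_term_bound i Hi).
set (T1 := K / (1 + K) * ta * (w2 * dL i)) in *.
set (T2 := ta * - sum3 (fun j => u j * du i j)) in *.
set (T3 := ta * (1 - q) * (u i * sum3 (fun j => du j j))) in *.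
set (T4 := ta * ((1 - K) / (1 + K)) * (1 - q) * (u i * sum3 (fun j => u j * dL j))) in *.
set (T5 := alpha * (1 - 3 * K) / t * q * (w2 * u i)) in *.
replace (_ + _ + _) with (T1 + T2 + T3 + T4 + T5) by (unfold T1, T2, T3, T4, T5, Rdiv; ring).
pose proof (Rabs_triang (T1 + T2 + T3 + T4) T5); pose proof (Rabs_triang (T1 + T2 + T3) T4).
pose proof (Rabs_triang (T1 + T2) T3); pose proof (Rabs_triang T1 T2).
assert (0 <= l2) by (pose proof (HdL 0 ltac:(lia)); pose proof (pow2_ge_0 (dL 0%nat)); lra).
assert (0 <= M ^ 2) by apply pow2_ge_0.
assert (Hit : 0 < 1 / t) by (apply Rdiv_lt_0_compat; lra).
assert (ta * (5 * w2 + 3 * M ^ 2 + 2 * l2) <= 5 * (1 + alpha) * ta * (w2 + M ^ 2 + l2)).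
{ assert (0 <= ta * alpha * (w2 + M ^ 2 + l2)) by (repeat apply Rmult_le_pos; lra).
  assert (0 <= ta * (M ^ 2 + 3 * l2)) by (apply Rmult_le_pos; lra).
  nra. }
assert (alpha / t * w2 <= 5 * (1 + alpha) * (1 / t) * (w2 + M ^ 2 + l2)).
{ assert (0 <= 1 / t * (w2 + M ^ 2 + l2)) by (apply Rmult_le_pos; lra).
  assert (0 <= alpha * (1 / t * (M ^ 2 + l2))) by (repeat apply Rmult_le_pos; lra).
  replace (alpha / t * w2) with (alpha * (1 / t * w2)) by (unfold Rdiv; ring).
  nra. }
lra.
Qed.

End EulerSource.

Lemma sqrt_sum3_sq_le (g : nat -> R) :
  sqrt (sum3 (fun i => g i ^ 2)) <= Rabs (g 0%nat) + Rabs (g 1%nat) + Rabs (g 2%nat).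
Proof.
unfold sum3; pose proof (Rabs_pos (g 0%nat)); pose proof (Rabs_pos (g 1%nat)); pose proof (Rabs_pos (g 2%nat)).
rewrite <- (sqrt_pow2 (Rabs (g 0%nat) + Rabs (g 1%nat) + Rabs (g 2%nat))) by lra.
apply sqrt_le_1_alt.
rewrite <- (pow2_abs (g 0%nat)), <- (pow2_abs (g 1%nat)), <- (pow2_abs (g 2%nat)); nra.
Qed.

Lemma periodic_sum3 (F : nat -> fld) : (forall j, (j < 3)%nat -> periodic (F j)) ->
  periodic (fun t x y z => sum3 (fun j => F j t x y z)).
Proof.
intros HF t x y z; unfold sum3.
destruct (HF 0%nat ltac:(lia) t x y z) as [A0 [B0 C0]].
destruct (HF 1%nat ltac:(lia) t x y z) as [A1 [B1 C1]].
destruct (HF 2%nat ltac:(lia) t x y z) as [A2 [B2 C2]].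
rewrite A0, B0, C0, A1, B1, C1, A2, B2, C2; auto.
Qed.

Lemma periodic_pow F n : periodic F -> periodic (fun t x y z => F t x y z ^ n).
Proof. intros HF t x y z; destruct (HF t x y z) as [A [B C]]; rewrite A, B, C; auto. Qed.

Lemma periodic_Dv_sq (v : vfld) : (forall i, (i < 3)%nat -> periodic (v i)) -> periodic (Dv_sq v).
Proof.
intros Hv; apply (periodic_sum3 (fun i t x y z => sum3 (fun j => dsp j (v i) t x y z ^ 2))).
intros i Hi; apply (periodic_sum3 (fun j t x y z => dsp j (v i) t x y z ^ 2)).
intros j Hj; apply periodic_pow, periodic_dsp; auto.
Qed.

Section MeanVelocity.
Variables (alpha K t0 t1 : R) (v : vfld) (L : fld).
Hypothesis Halpha : 0 < alpha.
Hypothesis HK : 0 <= K <= 1/3.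
Hypothesis Ht0 : 0 <= t0.
Hypothesis Hv : forall i, (i < 3)%nat -> smooth_on t0 t1 (v i) /\ periodic (v i).
Hypothesis HL : smooth_on t0 t1 L.
Hypothesis HLper : periodic L.
Hypothesis Hsmall : forall t x y z, t0 < t < t1 -> sqrt (vsq v t x y z) < 1/10.
Hypothesis Heuler : forall t x y z, t0 < t < t1 -> euler_eqs alpha K v L t x y z.
Variable t : R.
Hypothesis Ht : t0 < t < t1.

Let M := norm_Dv_Linf v t.
Let l2 := fun x y z => sum3 (fun j => dsp j L t x y z ^ 2).
Let Q := 2 * (vbar v 0 t ^ 2 + vbar v 1 t ^ 2 + vbar v 2 t ^ 2) + 54 * M ^ 2.

Lemma slab_cont_v ds i : (i < 3)%nat -> slab_cont t0 t1 (pdl ds (v i)).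
Proof. intros Hi t' x y z Ht'; exact (proj1 (proj1 (Hv i Hi) ds 0%nat t' x y z Ht')). Qed.

Lemma slab_cont_L ds : slab_cont t0 t1 (pdl ds L).
Proof. intros t' x y z Ht'; exact (proj1 (HL ds 0%nat t' x y z Ht')). Qed.

Lemma abs_dsp_v_le_norm_Dv_Linf i j x y z : (i < 3)%nat -> (j < 3)%nat ->
  Rabs (dsp j (v i) t x y z) <= M.
Proof.
intros Hi Hj.
assert (Hc : forall x y z, cont4 (Dv_sq v) t x y z).
{ intros x' y' z'; apply (cont4_sum3 (fun i t x y z => sum3 (fun j => dsp j (v i) t x y z ^ 2))).
  intros i' Hi'; apply (cont4_sum3 (fun j t x y z => dsp j (v i') t x y z ^ 2)); intros j' Hj'.
  apply (cont4_pow (dsp j' (v i'))), (slab_cont_v (S j' :: nil) i' Hi' t x' y' z' Ht). }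
destruct (bounded_periodic (Dv_sq v) t Hc (periodic_Dv_sq v (fun i Hi => proj2 (Hv i Hi))))
  as [B HB].
apply Rle_trans with (sqrt (Dv_sq v t x y z)).
- rewrite <- (sqrt_pow2 (Rabs _)) by apply Rabs_pos; apply sqrt_le_1_alt; rewrite pow2_abs.
  unfold Dv_sq; eapply Rle_trans; [apply (sq_le_sum3_sq (fun j => dsp j (v i) t x y z) j Hj)|].
  apply (le_sum3 (fun i => sum3 (fun j => dsp j (v i) t x y z ^ 2))); auto.
  intros; apply sum3_sq_nonneg.
- unfold M, norm_Dv_Linf; apply (le_Lub_Rbar_real _ (sqrt B)); [|exists x, y, z; reflexivity].
  intros r [x' [y' [z' ->]]]; apply sqrt_le_1_alt.
  eapply Rle_trans; [apply RRle_abs | apply HB].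
Qed.

Lemma vsq_le_1 x y z : vsq v t x y z <= 1.
Proof.
pose proof (Hsmall t x y z Ht); pose proof (sqrt_pos (vsq v t x y z)).
rewrite <- (sqrt_sqrt (vsq v t x y z)) by apply sum3_sq_nonneg; nra.
Qed.

Lemma vsq_le_mean_velocity_bound x y z : 0 <= x <= 1 -> 0 <= y <= 1 -> 0 <= z <= 1 ->
  vsq v t x y z <= Q.
Proof.
intros Hx Hy Hz.
assert (H : forall i, (i < 3)%nat -> v i t x y z ^ 2 <= 2 * vbar v i t ^ 2 + 18 * M ^ 2).
{ intros i Hi.
  assert (Hdev : Rabs (v i t x y z - vbar v i t) <= 3 * M).
  { apply (deviation_from_mean t0 t1); auto; [apply Hv, Hi|].
    intros j x' y' z' Hj; apply abs_dsp_v_le_norm_Dv_Linf; auto. }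
  set (e := v i t x y z - vbar v i t) in Hdev.
  assert (e ^ 2 <= 9 * M ^ 2) by (rewrite <- (pow2_abs e); pose proof (Rabs_pos e); nra).
  replace (v i t x y z) with (vbar v i t + e) by (unfold e; ring).
  pose proof (pow2_ge_0 (vbar v i t - e)); nra. }
unfold Q, vsq, sum3.
pose proof (H 0%nat ltac:(lia)); pose proof (H 1%nat ltac:(lia)); pose proof (H 2%nat ltac:(lia)); lra.
Qed.
Let ta := Rpower t (- alpha).
Let a := alpha * (1 - 3 * K) / t.
Let source (i : nat) : fld := fun t' x y z =>
  pd 0 (v i) t' x y z + a * v i t' x y z + K / (1 + K) * ta * dsp i L t' x y z.

Lemma slab_cont_source_parts i : (i < 3)%nat ->
  slab_cont t0 t1 (v i) /\ slab_cont t0 t1 (pd 0 (v i)) /\ slab_cont t0 t1 (dsp i L).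
Proof.
intros Hi; split; [|split].
- exact (slab_cont_v nil i Hi).
- exact (slab_cont_v (0%nat :: nil) i Hi).
- exact (slab_cont_L (S i :: nil)).
Qed.

Lemma slab_cont_source i : (i < 3)%nat -> slab_cont t0 t1 (source i).
Proof.
intros Hi; destruct (slab_cont_source_parts i Hi) as [H0 [H1 H2]].
repeat apply slab_cont_plus; try apply slab_cont_scal; auto.
Qed.

Lemma int3_source i : (i < 3)%nat -> int3 (source i t) = int3 (pd 0 (v i) t) + a * vbar v i t.
Proof.
intros Hi; destruct (slab_cont_source_parts i Hi) as [H0 [H1 H2]].
unfold source; cbv beta.
rewrite (int3_plus t0 t1 t Ht (fun t x y z => pd 0 (v i) t x y z + a * v i t x y z)
  (fun t x y z => K / (1 + K) * ta * dsp i L t x y z))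
  by (try apply slab_cont_plus; try apply slab_cont_scal; auto).
rewrite (int3_plus t0 t1 t Ht (pd 0 (v i)) (fun t x y z => a * v i t x y z))
  by (try apply slab_cont_scal; auto).
rewrite (int3_scal t0 t1 t Ht a (v i)), (int3_scal t0 t1 t Ht (K / (1 + K) * ta) (dsp i L)) by auto.
rewrite (int3_dsp_periodic t0 t1 t L) by auto.
change (vbar v i t) with (int3 (v i t)); ring.
Qed.

Let c := 5 * (1 + alpha) * (ta + 1 / t).

Lemma source_pointwise_bound i x y z : (i < 3)%nat ->
  0 <= x <= 1 -> 0 <= y <= 1 -> 0 <= z <= 1 ->
  Rabs (source i t x y z) <= c * (Q + M ^ 2 + l2 x y z).
Proof.
intros Hi Hx Hy Hz.
assert (HM : 0 <= M) by (eapply Rle_trans; [apply Rabs_pos | apply (abs_dsp_v_le_norm_Dv_Linf 0 0 x y z); lia]).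
assert (Hc : 0 <= c).
{ assert (0 < ta) by apply exp_pos; assert (0 < 1 / t) by (apply Rdiv_lt_0_compat; lra).
  unfold c; apply Rmult_le_pos; lra. }
destruct (Heuler t x y z Ht) as [Hvi _]; specialize (Hvi i Hi); cbv zeta in Hvi.
apply Rle_trans with (c * (vsq v t x y z + M ^ 2 + l2 x y z)).
- apply (euler_source_bound alpha K t ta Halpha HK ltac:(lra) ltac:(apply exp_pos)
    (fun j => v j t x y z) (fun j => dsp j L t x y z) (fun j k => dsp k (v j) t x y z)); auto.
  + split; [apply sum3_sq_nonneg | apply vsq_le_1].
  + intros j Hj; apply (sq_le_sum3_sq (fun j => v j t x y z) j Hj).
  + intros j Hj; apply (sq_le_sum3_sq (fun j => dsp j L t x y z) j Hj).
  + intros j k Hj Hk; rewrite <- (pow2_abs (dsp k (v j) t x y z)).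
    pose proof (abs_dsp_v_le_norm_Dv_Linf j k x y z Hj Hk); pose proof (Rabs_pos (dsp k (v j) t x y z)).
    nra.
- apply Rmult_le_compat_l; auto.
  pose proof (vsq_le_mean_velocity_bound x y z Hx Hy Hz); lra.
Qed.

Lemma mean_source_bound i : (i < 3)%nat ->
  Rabs (int3 (pd 0 (v i) t) + a * vbar v i t) <= c * (Q + M ^ 2 + norm_DL_L2 L t ^ 2).
Proof.
intros Hi; rewrite <- (int3_source i Hi).
set (l2f := (fun t' x y z => sum3 (fun j => dsp j L t' x y z ^ 2)) : fld).
assert (Hl2f : slab_cont t0 t1 l2f).
{ intros t' x y z Ht'; apply (cont4_sum3 (fun j t x y z => dsp j L t x y z ^ 2)); intros j Hj.
  apply (cont4_pow (dsp j L)), (slab_cont_L (S j :: nil) t' x y z Ht'). }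
assert (Hint : int3 (l2f t) = norm_DL_L2 L t ^ 2).
{ unfold norm_DL_L2; rewrite pow2_sqrt; [reflexivity|].
  rewrite <- (int3_const 0).
  apply (int3_le t0 t1 t Ht (fun _ _ _ _ => 0) l2f); auto using slab_cont_const.
  intros; apply sum3_sq_nonneg. }
apply Rle_trans with (int3 (fun x y z => c * ((Q + M ^ 2) + l2f t x y z))).
- apply (abs_int3_le t0 t1 t Ht (source i) (fun t' x y z => c * ((Q + M ^ 2) + l2f t' x y z))).
  + apply slab_cont_source; auto.
  + apply slab_cont_scal, slab_cont_plus; auto using slab_cont_const.
  + intros x y z Hx Hy Hz; apply source_pointwise_bound; auto.
- rewrite (int3_scal t0 t1 t Ht c (fun t' x y z => (Q + M ^ 2) + l2f t' x y z))
    by (apply slab_cont_plus; auto using slab_cont_const).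
  rewrite (int3_plus t0 t1 t Ht (fun _ _ _ _ => Q + M ^ 2) l2f) by auto using slab_cont_const.
  rewrite int3_const, Hint; lra.
Qed.

Lemma is_derive_vbar i : (i < 3)%nat -> is_derive (vbar v i) t (int3 (pd 0 (v i) t)).
Proof.
intros Hi; apply (is_derive_int3 t0 t1); auto.
destruct (slab_cont_source_parts i Hi) as [H0 [H1 _]]; split; [|split]; auto.
intros t' x y z Ht'; exact (proj2 (proj1 (Hv i Hi) nil 0%nat t' x y z Ht')).
Qed.

Lemma mean_velocity_remainder_bound :
  sqrt (sum3 (fun i => (int3 (pd 0 (v i) t) + a * vbar v i t) ^ 2))
  <= 15 * (1 + alpha) * (1 + Rpower t (1 - alpha)) / t * (Q + M ^ 2 + norm_DL_L2 L t ^ 2).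
Proof.
eapply Rle_trans; [apply (sqrt_sum3_sq_le (fun i => int3 (pd 0 (v i) t) + a * vbar v i t))|].
pose proof (mean_source_bound 0 ltac:(lia)); pose proof (mean_source_bound 1 ltac:(lia)).
pose proof (mean_source_bound 2 ltac:(lia)).
assert (Hpow : Rpower t (1 - alpha) = t * ta)
  by (replace (1 - alpha) with (1 + - alpha) by ring; rewrite Rpower_plus, Rpower_1 by lra; reflexivity).
replace (15 * (1 + alpha) * (1 + Rpower t (1 - alpha)) / t) with (3 * c)
  by (rewrite Hpow; unfold c; field; lra).
lra.
Qed.

End MeanVelocity.

Definition sq_monomial (k : nat) : nat -> nat := fun n => if Nat.eqb n k then 2%nat else 0%nat.

(* 55 = 54 + 1: the 54 comes from |v - vbar| <= 3 |Dv|_oo in [vsq_le_mean_velocity_bound]. *)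
Definition mean_velocity_poly : poly6 :=
  (2, sq_monomial 0) :: (2, sq_monomial 1) :: (2, sq_monomial 2) ::
  (55, sq_monomial 4) :: (1, sq_monomial 5) :: nil.

Lemma mean_velocity_poly_at_least_quadratic : at_least_quadratic mean_velocity_poly.
Proof. repeat constructor. Qed.

Lemma peval6_mean_velocity_poly X : peval6 mean_velocity_poly X =
  2 * (X 0%nat ^ 2 + X 1%nat ^ 2 + X 2%nat ^ 2) + 54 * X 4%nat ^ 2 + X 4%nat ^ 2 + X 5%nat ^ 2.
Proof. unfold peval6, mean_velocity_poly, mono6; simpl; ring. Qed.

Theorem lemma4p1 (alpha K : R) (Halpha : 0 < alpha) (HK : 0 <= K <= 1/3) :
  exists (C : R) (p : poly6), at_least_quadratic p /\
  forall (t0 t1 : R) (v : vfld) (L : fld),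
    1 <= t0 -> t0 < t1 ->
    (forall i, (i < 3)%nat -> smooth_on t0 t1 (v i) /\ periodic (v i)) ->
    smooth_on t0 t1 L -> periodic L ->
    (forall t x y z, t0 < t < t1 -> sqrt (vsq v t x y z) < 1/10) ->
    (forall t x y z, t0 < t < t1 -> euler_eqs alpha K v L t x y z) ->
    forall t, t0 < t < t1 ->
      exists g : nat -> R,
        (forall i, (i < 3)%nat ->
           is_derive (vbar v i) t (- (alpha * (1 - 3 * K) / t) * vbar v i t + g i)) /\
        sqrt (sum3 (fun i => (g i)^2)) <=
          C * (1 + Rpower t (1 - alpha)) / t *
          peval6 p (fun k => match k with
                             | 0%nat => vbar v 0 t
                             | 1%nat => vbar v 1 t
                             | 2%nat => vbar v 2 t
                             | 3%nat => norm_Dv_H1 v t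
                             | 4%nat => norm_Dv_Linf v t
                             | _ => norm_DL_L2 L t
                             end).
Proof.
exists (15 * (1 + alpha)), mean_velocity_poly.
split; [apply mean_velocity_poly_at_least_quadratic|].
intros t0 t1 v L Ht0 _ Hv HL HLper Hsmall Heuler t Ht.
exists (fun i => int3 (pd 0 (v i) t) + alpha * (1 - 3 * K) / t * vbar v i t); split.
- intros i Hi.
  replace (- _ * _ + _) with (int3 (pd 0 (v i) t)) by ring.
  apply (is_derive_vbar t0 t1 v L); auto.
- rewrite peval6_mean_velocity_poly.
  apply (mean_velocity_remainder_bound alpha K t0 t1 v L); auto; lra.
Qed.
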